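(* Let $p$ be a prime, let $c,d$ be positive integers, let $X$ be a set with $d$ elements, let $L_c(X)$ be the free nilpotent $\mathbb{Z}_p$-Lie algebra of class $c$ on $X$, regarded inside $\widetilde{L}_c(X)=L_c(X)\otimes_{\mathbb{Z}_p}\mathbb{Q}_p$, and let $$\widehat{L}_c(X)=L_c(X)+\tfrac{1}{p}\gamma_2(L_c(X))+\tfrac{1}{p^2}\gamma_3(L_c(X))+\dots+\tfrac{1}{p^{c-1}}\gamma_c(L_c(X))\subseteq\widetilde{L}_c(X).$$ Then: (a) $\widehat{L}_c(X)$ is a finitely generated powerful $\mathbb{Z}_p$-Lie algebra of nilpotency class $c$; (b) the rank of $\widehat{L}_c(X)$ is bounded by a function of $c$ and $d$ only; (c) the index $|\widehat{L}_c(X):L_c(X)|$ is bounded by a function of $p,c,d$ only.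
   Context: $L_c(X)$ is the free $\mathbb{Z}_p$-Lie algebra on $X$ modulo the $(c+1)$-st term of its lower central series; $\gamma_1(L)=L$, $\gamma_{i+1}(L)=[\gamma_i(L),L]$. A $\mathbb{Z}_p$-Lie algebra $L$ is powerful if $[L,L]\subseteq pL$. The rank of a $\mathbb{Z}_p$-Lie algebra (or module) is the maximum, over all $\mathbb{Z}_p$-submodules $M$, of the minimal number of generators of $M$ as a $\mathbb{Z}_p$-module. *)

From HB Require Import structures.
From mathcomp Require Import all_boot all_order all_algebra.
From mathcomp Require Import boolp.
From Stdlib Require Import ProofIrrelevance.
Set Implicit Arguments.
Unset Strict Implicit.
Unset Printing Implicit Defensive.
Import Order.TTheory GRing.Theory Num.Theory.
Local Open Scope ring_scope.

(* The p-adic integers Z_p, as the inverse limit of Z/p^(n+1)Z:        *)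
(* a p-adic integer is a sequence (a_n) of integers with               *)
(* 0 <= a_n < p^(n+1) (canonical residues) and a_(n+1) = a_n mod p^(n+1). *)
Section Padic.
Variable p : nat.
Local Notation md n := ((p ^ n.+1)%N%:Z).

Record padic := Padic {
  pval : nat -> int;
  pval_mod : forall n, modz (pval n) (md n) = pval n;
  pval_compat : forall n, modz (pval n.+1) (md n) = pval n }.

HB.instance Definition _ := gen_eqMixin padic.
HB.instance Definition _ := gen_choiceMixin padic.

Lemma padic_eq (a b : padic) : pval a = pval b -> a = b.
Proof.
case: a b => [a am ac] [b bm bc] /= eab; subst b.
by rewrite (proof_irrelevance _ am bm) (proof_irrelevance _ ac bc).
Qed.

Lemma red_md (x : int) n : modz (modz x (md n.+1)) (md n) = modz x (md n).
Proof.
rewrite {2}(divz_eq x (md n.+1)).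
have -> : md n.+1 = (p%:Z * md n) by rewrite expnS PoszM.
by rewrite mulrA modzMDl.
Qed.

Definition pzero : padic.
Proof. by exists (fun _ => 0) => n; rewrite mod0z. Defined.

Definition pone : padic.
Proof. by exists (fun n => modz 1 (md n)) => n; rewrite ?modz_mod ?red_md. Defined.

Definition padd (a b : padic) : padic.
Proof.
exists (fun n => modz (pval a n + pval b n) (md n)) => n; first by rewrite modz_mod.
by rewrite red_md -modzDm !pval_compat.
Defined.

Definition popp (a : padic) : padic.
Proof.
exists (fun n => modz (- pval a n) (md n)) => n; first by rewrite modz_mod.
by rewrite red_md -modzNm pval_compat.
Defined.

Definition pmul (a b : padic) : padic.
Proof.
exists (fun n => modz (pval a n * pval b n) (md n)) => n; first by rewrite modz_mod.
by rewrite red_md -modzMm !pval_compat.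
Defined.

Lemma paddA : associative padd.
Proof.
move=> a b c; apply: padic_eq; apply: funext => n /=.
by rewrite modzDmr modzDml addrA.
Qed.
Lemma paddC : commutative padd.
Proof. by move=> a b; apply: padic_eq; apply: funext => n /=; rewrite addrC. Qed.
Lemma padd0 : left_id pzero padd.
Proof. by move=> a; apply: padic_eq; apply: funext => n /=; rewrite add0r pval_mod. Qed.
Lemma paddN : left_inverse pzero popp padd.
Proof.
by move=> a; apply: padic_eq; apply: funext => n /=; rewrite modzDml addNr mod0z.
Qed.

HB.instance Definition _ := GRing.isZmodule.Build padic paddA paddC padd0 paddN.

Lemma pmulA : associative pmul.
Proof.
move=> a b c; apply: padic_eq; apply: funext => n /=.
by rewrite modzMmr modzMml mulrA.
Qed.
Lemma pmulC : commutative pmul.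
Proof. by move=> a b; apply: padic_eq; apply: funext => n /=; rewrite mulrC. Qed.
Lemma pmul1 : left_id pone pmul.
Proof. by move=> a; apply: padic_eq; apply: funext => n /=; rewrite modzMml mul1r pval_mod. Qed.
Lemma pmulDl : left_distributive pmul (@GRing.add padic).
Proof.
move=> a b c; apply: padic_eq; apply: funext => n /=.
by rewrite modzMml modzDm mulrDl.
Qed.

HB.instance Definition _ := GRing.Zmodule_isComPzRing.Build padic pmulA pmulC pmul1 pmulDl.

End Padic.

Section Lie.
Variables (R : comPzRingType) (V : lmodType R).

Definition lie_bracket (br : V -> V -> V) : Prop :=
  [/\ (forall a u v w, br (a *: u + v) w = a *: br u w + br v w),
      (forall a u v w, br u (a *: v + w) = a *: br u v + br u w),
      (forall u, br u u = 0) &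
      (forall u v w, br u (br v w) + br v (br w u) + br w (br u v) = 0)].

Inductive span (S : V -> Prop) : V -> Prop :=
  | span0 : span S 0
  | span_gen v : S v -> span S v
  | span_add u v : span S u -> span S v -> span S (u + v)
  | span_scale a v : span S v -> span S (a *: v).

Inductive lie_span (br : V -> V -> V) (G : V -> Prop) : V -> Prop :=
  | lspan0 : lie_span br G 0
  | lspan_gen v : G v -> lie_span br G v
  | lspan_add u v : lie_span br G u -> lie_span br G v -> lie_span br G (u + v)
  | lspan_scale a v : lie_span br G v -> lie_span br G (a *: v)
  | lspan_br u v : lie_span br G u -> lie_span br G v -> lie_span br G (br u v).

Definition submodule (S : V -> Prop) : Prop :=
  [/\ S 0, (forall u v, S u -> S v -> S (u + v)) & (forall a u, S u -> S (a *: u))].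

Definition lie_subalg (br : V -> V -> V) (S : V -> Prop) : Prop :=
  submodule S /\ (forall u v, S u -> S v -> S (br u v)).

Definition commut (br : V -> V -> V) (A B : V -> Prop) : V -> Prop :=
  span (fun w => exists u v, [/\ A u, B v & w = br u v]).

(* lower central series, 1-indexed: gamma 1 = L, gamma (i+1) = [gamma i, L]
   (gamma 0 is also set to L, and is never used) *)
Fixpoint gamma (br : V -> V -> V) (L : V -> Prop) (i : nat) : V -> Prop :=
  match i with
  | 0 => L
  | i'.+1 => match i' with 0 => L | _ => commut br (gamma br L i') L end
  end.

Definition nil_class (br : V -> V -> V) (S : V -> Prop) (c : nat) : Prop :=
  forall v, gamma br S c.+1 v -> v = 0.

Definition lie_fin_gen (br : V -> V -> V) (S : V -> Prop) : Prop :=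
  exists gs : seq V, forall v, S v <-> lie_span br (fun w => w \in gs) v.

Definition rank_le (S : V -> Prop) (r : nat) : Prop :=
  forall M : V -> Prop, submodule M -> (forall v, M v -> S v) ->
    exists gs : seq V, (size gs <= r)%N /\
      forall v, M v <-> span (fun w => w \in gs) v.

Definition index_le (L S : V -> Prop) (g : nat) : Prop :=
  (forall v, L v -> S v) /\
  exists reps : seq V, (size reps <= g)%N /\
    forall v, S v -> exists2 r, r \in reps & L (v - r).

End Lie.

Definition free_nilpotent_on (R : comPzRingType) (V : lmodType R) (br : V -> V -> V) (L : V -> Prop) (c d : nat)
    (x : 'I_d -> V) : Prop :=
  [/\ lie_subalg br L,
      (forall v, L v <-> lie_span br (fun w => exists i, w = x i) v),
      (forall v, gamma br L c.+1 v -> v = 0) &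
      (forall (W : lmodType R) (brW : W -> W -> W), lie_bracket brW ->
         (forall w, gamma brW (fun _ => True) c.+1 w -> w = 0) ->
         forall f : 'I_d -> W, exists phi : V -> W,
           [/\ (forall i, phi (x i) = f i),
               (forall a u v, L u -> L v -> phi (a *: u + v) = a *: phi u + phi v) &
               (forall u v, L u -> L v -> phi (br u v) = brW (phi u) (phi v))])].


(* V is L (x)_{Z_p} Q_p : multiplication by p is bijective on V (so V is a
   Q_p-vector space) and every vector has a p-power multiple in L. *)
Definition qp_envelope (p : nat) (V : lmodType (padic p)) (L : V -> Prop) : Prop :=
  bijective (fun v : V => (p%:R : padic p) *: v) /\
  (forall v : V, exists k : nat, L ((p ^ k)%:R *: v)).

Definition powerful (p : nat) (V : lmodType (padic p)) (br : V -> V -> V)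
    (S : V -> Prop) : Prop :=
  forall w, commut br S S w -> exists u, S u /\ w = (p%:R : padic p) *: u.

(* Lhat = L + (1/p) gamma_2(L) + ... + (1/p^(c-1)) gamma_c(L) inside V *)
Definition Lhat (p : nat) (V : lmodType (padic p)) (br : V -> V -> V)
    (L : V -> Prop) (c : nat) : V -> Prop :=
  fun v => exists vs : 'I_c -> V,
    v = \sum_(i < c) vs i /\
    forall i : 'I_c, gamma br L i.+1 ((p ^ i)%:R *: vs i).

(* Let S_m be the span of the left-normed commutators of weight at least m in
   the generators of L, and H_m = sum_j p^-j S_(j+m) inside V.  Bilinearity
   gives [H_a, H_b] <= H_(a+b); moreover H_(m+1) = p H_m, H_(c+1) = 0 because L
   has class c, and Lhat = H_1.  Hence [Lhat, Lhat] <= H_2 = p Lhat, so Lhat is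
   a powerful Lie subalgebra, and gamma_(c+1)(Lhat) <= H_(c+1) = 0.  Further,
   H_1 is spanned by the n = d + d^2 + ... + d^c elements p^-(w-1) u with u a
   left-normed commutator of weight w <= c.  As Z_p is a principal ideal ring,
   every submodule of a module generated by n elements is generated by n
   elements, which bounds the rank; and as p^(c-1) maps these generators into
   L, the index |Lhat : L| is at most p^((c-1) n). *)

From Pilot Require Import Defs.
From mathcomp Require Import all_boot all_order all_algebra boolp ring.
Set Implicit Arguments. Unset Strict Implicit. Unset Printing Implicit Defensive.
Import Order.TTheory GRing.Theory Num.Theory.
Local Open Scope ring_scope.
Local Notation span := Defs.span.

Section PadicIntegers.
Variable p : nat.
Hypothesis p_prime : prime p.
Local Notation md n := ((p ^ n.+1)%N%:Z).
Local Notation Zp := (padic p).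

Let md_gt0 n : 0 < md n.
Proof. by rewrite ltz_nat expn_gt0 prime_gt0. Qed.

Let md_neq0 n : md n != 0.
Proof. by rewrite gt_eqF. Qed.

Lemma pvalM (a b : Zp) n : pval (a * b) n = modz (pval a n * pval b n) (md n).
Proof. by []. Qed.

Lemma pvalB (a b : Zp) n : pval (a - b) n = modz (pval a n - pval b n) (md n).
Proof. exact: modzDmr. Qed.

Lemma pval_natr (r : nat) n : pval (r%:R : Zp) n = modz r (md n).
Proof. by elim: r => [|r IH]; rewrite ?mod0z // mulrS /= IH modzDm intS. Qed.

Lemma pval_ge0 (a : Zp) n : 0 <= pval a n.
Proof. by rewrite -pval_mod modz_ge0. Qed.

Lemma pval_lt (a : Zp) n : pval a n < md n.
Proof. by rewrite -pval_mod ltz_pmod. Qed.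

Lemma dvdz_md j k : (j <= k)%N -> (md j %| md k)%Z.
Proof. by move=> jk; rewrite dvdzE /= dvdn_exp2l. Qed.

Lemma pval_dvd (a : Zp) j k : (j <= k)%N -> (md j %| pval a k - pval a j)%Z.
Proof.
move=> /subnK <-; elim: (k - j)%N => [|t IH]; first by rewrite add0n subrr dvdz0.
have step : (md (t + j) %| pval a (t + j).+1 - pval a (t + j))%Z.
  by rewrite -eqz_mod_dvd pval_compat pval_mod.
rewrite addSn -(subrK (pval a (t + j)) (pval a _)) -addrA rpredD //.
by apply: dvdz_trans step; apply: dvdz_md; apply: leq_addl.
Qed.

Lemma pval_modz (a : Zp) j k : (j <= k)%N -> modz (pval a k) (md j) = pval a j.
Proof.
move=> jk; have /eqP -> : (pval a k == pval a j %[mod md j])%Z.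
  by rewrite eqz_mod_dvd pval_dvd.
exact: pval_mod.
Qed.

Lemma padic_neq0 (a : Zp) : a != 0 -> exists n, pval a n != 0.
Proof.
move=> a0; apply/not_existsP => H; move/eqP: a0; apply.
apply: padic_eq; apply: funext => n /=.
by have /negP := H n; rewrite negbK => /eqP.
Qed.

Lemma padic_dvd_pexp (a : Zp) k : (forall n, (n < k)%N -> pval a n = 0) ->
  exists b : Zp, a = (p ^ k)%:R * b.
Proof.
move=> a_low.
have dvdP n : ((p ^ k)%N%:Z %| pval a (n + k))%Z.
  case: k a_low => [_|k a_low]; first exact: dvd1z.
  by have := pval_dvd a (ltnW (leq_addl n k.+1)); rewrite (a_low k) // subr0.
set P := (p ^ k)%N%:Z in dvdP *.
have P0 : P != 0 by rewrite /P gt_eqF // ltz_nat expn_gt0 prime_gt0.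
have mdD n : md (n + k) = md n * P by rewrite /P -PoszM -expnD addSn.
pose bv n := modz (divz (pval a (n + k)) P) (md n).
have bv_mod n : modz (bv n) (md n) = bv n by rewrite modz_mod.
have bv_compat n : modz (bv n.+1) (md n) = bv n.
  rewrite /bv red_md; apply/eqP; rewrite eqz_mod_dvd.
  have := pval_dvd a (leqnSn (n + k)); rewrite -addSn mdD.
  rewrite -(divzK (dvdP n)) -(divzK (dvdP n.+1)) -mulrBl.
  by rewrite dvdz_mul2r // !mulzK.
exists (Padic bv_mod bv_compat); apply: padic_eq; apply: funext => n.
rewrite pvalM pval_natr /= /bv modzMm mulrC divzK ?dvdP //.
by rewrite pval_modz // leq_addr.
Qed.

Lemma coprimez_pval_md (u : Zp) n : pval u 0 != 0 -> coprimez (pval u n) (md n).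
Proof.
move=> u0; rewrite coprimezE /= coprimeXr // coprime_sym prime_coprime //.
apply: contra u0 => p_u; rewrite -(pval_modz u (leq0n n)) expn1.
by apply/eqP/dvdz_mod0P; rewrite dvdzE.
Qed.

Lemma padic_unit (u : Zp) : pval u 0 != 0 -> exists w, u * w = 1.
Proof.
move=> u0.
have inv n : {s | (md n %| s * pval u n - 1)%Z}.
  have [s [t /= E]] := Bezoutz (pval u n) (md n).
  exists s; move/eqP: (coprimez_pval_md n u0) E => -> <-.
  by rewrite opprD addrA subrr add0r rpredN dvdz_mull.
pose w n := modz (sval (inv n)) (md n).
have w_mod n : modz (w n) (md n) = w n by rewrite modz_mod.
(* Compatible because an inverse of [u] modulo [md n] is unique modulo [md n]. *)
have w_compat n : modz (w n.+1) (md n) = w n.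
  rewrite /w red_md; apply/eqP; rewrite eqz_mod_dvd.
  have cop : coprimez (md n) (pval u n) by rewrite coprimez_sym coprimez_pval_md.
  rewrite -(Gauss_dvdzl _ cop).
  case: (inv n) (inv n.+1) => s sP [s' s'P] /=.
  have s'P_n : (md n %| s' * pval u n.+1 - 1)%Z.
    by apply: dvdz_trans s'P; apply: dvdz_md.
  have dvd_diff : (md n %| s' * (pval u n.+1 - pval u n))%Z.
    by apply: dvdz_mull; apply: pval_dvd.
  have -> : (s' - s) * pval u n =
      (s' * pval u n.+1 - 1) - s' * (pval u n.+1 - pval u n) - (s * pval u n - 1).
    by ring.
  by apply: rpredB => //; apply: rpredB.
exists (Padic w_mod w_compat); apply: padic_eq; apply: funext => n /=.
rewrite /w modzMmr; apply/eqP; rewrite eqz_mod_dvd mulrC.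
exact: (svalP (inv n)).
Qed.

Lemma padic_pexp_unit (a : Zp) : a != 0 ->
  exists k u, (exists w, u * w = 1) /\ a = (p ^ k)%:R * u.
Proof.
move=> /padic_neq0 a_nz.
have [v av v_min] := ex_minnP a_nz.
have a_low j : (j < v)%N -> pval a j = 0.
  by move=> jv; apply/eqP; apply: contraTT jv => /v_min; rewrite leqNgt.
have [b Eb] := padic_dvd_pexp a_low.
exists v, b; split => //; apply: padic_unit.
apply: contra av => /eqP b0.
have /dvdzP [t Et] : (p%:Z %| pval b v)%Z.
  by have := pval_dvd b (leq0n v); rewrite b0 subr0 expn1.
rewrite Eb pvalM pval_natr modzMml Et; apply/eqP/dvdz_mod0P.
by apply/dvdzP; exists t; rewrite expnSr PoszM; ring.
Qed.

Lemma padic_digits (a : Zp) k : exists2 r : nat, (r < p ^ k)%N &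
  exists b : Zp, a = r%:R + (p ^ k)%:R * b.
Proof.
case: k => [|k]; first by exists 0%N => //; exists a; rewrite add0r expn0 mul1r.
exists `|pval a k|%N; first by rewrite -ltz_nat gez0_abs ?pval_ge0 ?pval_lt.
have low n : (n < k.+1)%N -> pval (a - `|pval a k|%N%:R) n = 0.
  move=> nk; rewrite pvalB pval_natr gez0_abs ?pval_ge0 //.
  by rewrite pval_modz -1?ltnS // subrr mod0z.
by have [b Eb] := padic_dvd_pexp low; exists b; rewrite -Eb addrC subrK.
Qed.

(* [I] need not be an ideal: an element of [I] of least p-adic valuation
   divides every element of [I]. *)
Lemma padic_pid (I : Zp -> Prop) : (exists2 a, I a & a != 0) ->
  exists2 g, I g & forall a, I a -> exists t, a = t * g.
Proof.
move=> [a0 Ia0 a0_nz].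
pose has_val k := exists2 a, I a /\ a != 0 &
  exists u, (exists w, u * w = 1) /\ a = (p ^ k)%:R * u.
have ex_val : exists k, `[< has_val k >].
  by have [k Ek] := padic_pexp_unit a0_nz; exists k; apply/asboolP; exists a0.
have [k /asboolP [g [Ig _] [u [[w uw] Eg]]] k_min] := ex_minnP ex_val.
exists g => // a Ia.
have [->|a_nz] := eqVneq a 0; first by exists 0; rewrite mul0r.
have [j [u' [u'_unit Ea]]] := padic_pexp_unit a_nz.
have kj : (k <= j)%N by apply: k_min; apply/asboolP; exists a => //; exists u'.
exists ((p ^ (j - k))%:R * u' * w).
rewrite Ea Eg -{1}(subnK kj) expnD natrM -[LHS]mulr1 -uw.
by ring.
Qed.

End PadicIntegers.

Section Submodules.
Variables (R : comPzRingType) (V : lmodType R).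
Implicit Types (S T M : V -> Prop) (gs : seq V).

Lemma span_min S M : submodule M -> (forall v, S v -> M v) ->
  forall v, span S v -> M v.
Proof.
move=> [M0 MD MZ] SM v.
by elim=> [|w /SM|u w _ Mu _ Mw|a w _ Mw] //; [apply: MD | apply: MZ].
Qed.

Lemma span_submod S : submodule (span S).
Proof. by split; [apply: span0 | apply: span_add | apply: span_scale]. Qed.

Lemma span_mono S T : (forall v, S v -> T v) -> forall v, span S v -> span T v.
Proof.
by move=> ST; apply: span_min; [apply: span_submod | move=> v /ST; apply: span_gen].
Qed.

Lemma submod0 M : submodule M -> M 0.
Proof. by case. Qed.

Lemma submodD M u v : submodule M -> M u -> M v -> M (u + v).
Proof. by case=> _ MD _; apply: MD. Qed.

Lemma submodZ M a u : submodule M -> M u -> M (a *: u).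
Proof. by case=> _ _ MZ; apply: MZ. Qed.

Lemma submodN M u : submodule M -> M u -> M (- u).
Proof. by move=> sM Mu; rewrite -scaleN1r; apply: (submodZ _ sM). Qed.

Lemma submodB M u v : submodule M -> M u -> M v -> M (u - v).
Proof. by move=> sM Mu Mv; apply: (submodD sM) => //; apply: submodN. Qed.

Lemma submodI M1 M2 : submodule M1 -> submodule M2 -> submodule (fun v => M1 v /\ M2 v).
Proof.
move=> sM1 sM2; split=> [|u v [? ?] [? ?]|a u [? ?]]; split.
- exact: submod0 sM1.
- exact: submod0 sM2.
- exact: submodD sM1 _ _.
- exact: submodD sM2 _ _.
- exact: submodZ sM1 _.
- exact: submodZ sM2 _.
Qed.

Lemma submod_sum M (I : Type) (r : seq I) (P : pred I) (F : I -> V) :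
  submodule M -> (forall i, P i -> M (F i)) -> M (\sum_(i <- r | P i) F i).
Proof. by case=> M0 MD _ MF; elim/big_ind: _. Qed.

Lemma submod_preim M (f : V -> V) :
  (forall a u v, f (a *: u + v) = a *: f u + f v) ->
  submodule M -> submodule (fun u => M (f u)).
Proof.
move=> f_lin [M0 MD MZ].
have f0 : f 0 = 0.
  have := f_lin 1 0 0; rewrite !scale1r addr0 => f00.
  by apply: (addrI (f 0)); rewrite addr0 -f00.
split; first by rewrite f0.
  by move=> u v Mu Mv; rewrite -[u]scale1r f_lin scale1r; apply: MD.
by move=> a u Mu; rewrite -[a *: u]addr0 f_lin f0 addr0; apply: MZ.
Qed.

Lemma span_lin_ind S M (f : V -> V) :
    (forall a u v, f (a *: u + v) = a *: f u + f v) -> submodule M ->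
    (forall v, S v -> M (f v)) ->
  forall v, span S v -> M (f v).
Proof. by move=> f_lin sM SM; apply: span_min; first exact: submod_preim. Qed.

Lemma span_nil (v : V) : span (fun w => w \in [::]) v -> v = 0.
Proof. by elim=> [|w //|u w _ -> _ ->|a w _ ->]; rewrite ?addr0 ?scaler0. Qed.

Lemma span_cons g gs v : span (fun w => w \in g :: gs) v <->
  exists a s, span (fun w => w \in gs) s /\ v = a *: g + s.
Proof.
split; last first.
  move=> [a [s [gs_s ->]]]; apply: span_add.
    by apply/span_scale/span_gen; rewrite inE eqxx.
  by apply: span_mono gs_s => w wgs; rewrite inE wgs orbT.
elim=> [|w|u w _ [a [s [gs_s ->]]] _ [b [t [gs_t ->]]]|b w _ [a [s [gs_s ->]]]].
- by exists 0, 0; split; [apply: span0 | rewrite scale0r addr0].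
- rewrite inE => /orP[/eqP ->|wgs].
    by exists 1, 0; split; [apply: span0 | rewrite scale1r addr0].
  by exists 0, w; split; [apply: span_gen | rewrite scale0r add0r].
- exists (a + b), (s + t); split; first exact: span_add.
  by rewrite scalerDl addrACA.
- exists (b * a), (b *: s); split; first exact: span_scale.
  by rewrite scalerDr scalerA.
Qed.

Lemma lie_span_span (br : V -> V -> V) S :
    (forall u v, span S u -> span S v -> span S (br u v)) ->
  forall v, span S v <-> lie_span br S v.
Proof.
move=> br_S v; split.
  apply: span_min => [|w Sw]; last exact: lspan_gen.
  by split; [apply: lspan0 | apply: lspan_add | apply: lspan_scale].
elim=> [|w Sw|u w _ Su _ Sw|a w _ Sw|u w _ Su _ Sw].
- exact: span0.
- exact: span_gen.
- exact: span_add.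
- exact: span_scale.
- exact: br_S.
Qed.

End Submodules.

Section FinitelyGeneratedModules.
Variable p : nat.
Hypothesis p_prime : prime p.
Variable V : lmodType (padic p).
Implicit Types (M L : V -> Prop) (gs : seq V).

(* The coefficients of [g] in the elements of [M] are multiples of one of
   them, [a1]; an element [m0] of [M] with coefficient [a1] together with
   generators of the intersection of [M] and [span gs] generate [M]. *)
Lemma rank_le_span_cons g gs r :
  rank_le (span (fun w => w \in gs)) r -> rank_le (span (fun w => w \in g :: gs)) r.+1.
Proof.
move=> IH M sM M_span.
pose lead a := exists m, M m /\ span (fun w => w \in gs) (m - a *: g).
have lead_of v : M v ->
    exists2 a, lead a & exists2 s, span (fun w => w \in gs) s & v = a *: g + s.
  move=> Mv; have /span_cons [a [s [gs_s Ev]]] := M_span v Mv.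
  by exists a; [exists v; split; rewrite // Ev addrAC subrr add0r | exists s].
have [[a0 lead_a0 a0_nz]|lead0] := pselect (exists2 a, lead a & a != 0); last first.
  have [hs [size_hs Mhs]] : exists hs : seq V, (size hs <= r)%N /\
      forall v, M v <-> span (fun w => w \in hs) v.
    apply: IH => // v /lead_of [a lead_a [s gs_s ->]].
    have [-> |a_nz] := eqVneq a 0; first by rewrite scale0r add0r.
    by case: lead0; exists a.
  by exists hs; split=> //; apply: leqW.
have [a1 [m0 [Mm0 gs_m0]] a1_gen] := padic_pid p_prime (ex_intro2 _ _ a0 lead_a0 a0_nz).
pose M' v := M v /\ span (fun w => w \in gs) v.
have sM' : submodule M' by apply: submodI => //; apply: span_submod.
have [hs [size_hs M'hs]] := IH M' sM' (fun v => @proj2 _ _).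
exists (m0 :: hs); split=> [|v]; first by rewrite ltnS.
split; last first.
  apply: span_min => // w; rewrite inE => /orP[/eqP -> //|w_hs].
  by have [] := proj2 (M'hs w) (span_gen w_hs).
move=> Mv; have [a lead_a [s gs_s Ev]] := lead_of v Mv.
have [t Et] := a1_gen a lead_a.
have M'v : M' (v - t *: m0).
  split; first by apply: submodB => //; apply: submodZ.
  have -> : v - t *: m0 = s - t *: (m0 - a1 *: g).
    by rewrite Ev Et -scalerA scalerBr opprB addrCA addrA.
  have gs_sub := span_submod (fun w => w \in gs).
  by apply: submodB => //; apply: submodZ.
by apply/span_cons; exists t, (v - t *: m0); split; [apply/M'hs | rewrite addrC subrK].
Qed.

Lemma rank_le_span gs : rank_le (span (fun w => w \in gs)) (size gs).
Proof.
elim: gs => [|g gs IH]; last exact: rank_le_span_cons.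
move=> M sM M_span; exists [::]; split=> // v.
split=> [/M_span/span_nil ->|/span_nil ->]; [exact: span0 | exact: submod0].
Qed.

Fixpoint coset_reps k gs : seq V :=
  if gs is g :: gs' then [seq n%:R *: g + r | n <- iota 0 (p ^ k), r <- coset_reps k gs']
  else [:: 0].

Lemma size_coset_reps k gs : size (coset_reps k gs) = ((p ^ k) ^ size gs)%N.
Proof. by elim: gs => //= g gs IH; rewrite size_allpairs size_iota IH expnS. Qed.

Lemma span_coset_reps k gs L : submodule L ->
    (forall g, g \in gs -> L ((p ^ k)%:R *: g)) ->
  forall v, span (fun w => w \in gs) v -> exists2 r, r \in coset_reps k gs & L (v - r).
Proof.
move=> sL; elim: gs => [|g gs IH] gsL v.
  by move/span_nil ->; exists 0; rewrite ?inE // subrr; apply: submod0.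
case/span_cons => a [s [gs_s ->]].
have [r r_reps Lr] := IH (fun h h_gs => gsL h (mem_behead (s := g :: gs) h_gs)) s gs_s.
have [n n_lt [b Ea]] := padic_digits p_prime a k.
exists (n%:R *: g + r); first by apply: allpairs_f; rewrite // mem_iota.
have -> : a *: g + s - (n%:R *: g + r) = b *: ((p ^ k)%:R *: g) + (s - r).
  by rewrite Ea scalerDl mulrC -scalerA opprD addrACA (addrAC (n%:R *: g)) subrr add0r.
by apply: submodD => //; apply: submodZ => //; apply/gsL/mem_head.
Qed.

Lemma index_le_span k gs L : submodule L ->
    (forall v, L v -> span (fun w => w \in gs) v) ->
    (forall g, g \in gs -> L ((p ^ k)%:R *: g)) ->
  index_le L (span (fun w => w \in gs)) ((p ^ k) ^ size gs).
Proof.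
move=> sL L_gs gsL; split=> //; exists (coset_reps k gs).
by rewrite size_coset_reps; split=> //; apply: span_coset_reps.
Qed.

End FinitelyGeneratedModules.

Section Bracket.
Variables (R : comPzRingType) (V : lmodType R) (br : V -> V -> V).
Hypothesis br_lie : lie_bracket br.

Lemma brDZl a u v w : br (a *: u + v) w = a *: br u w + br v w.
Proof. by case: br_lie. Qed.

Lemma brDZr a u v w : br u (a *: v + w) = a *: br u v + br u w.
Proof. by case: br_lie. Qed.

Lemma br0l w : br 0 w = 0.
Proof.
have := brDZl 1 0 0 w; rewrite !scale1r addr0 => E.
by apply: (addrI (br 0 w)); rewrite addr0 -E.
Qed.

Lemma br0r w : br w 0 = 0.
Proof.
have := brDZr 1 w 0 0; rewrite !scale1r addr0 => E.
by apply: (addrI (br w 0)); rewrite addr0 -E.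
Qed.

Lemma brDl u v w : br (u + v) w = br u w + br v w.
Proof. by rewrite -{1}[u]scale1r brDZl scale1r. Qed.

Lemma brDr u v w : br u (v + w) = br u v + br u w.
Proof. by rewrite -{1}[v]scale1r brDZr scale1r. Qed.

Lemma brZl a u w : br (a *: u) w = a *: br u w.
Proof. by rewrite -[a *: u]addr0 brDZl br0l addr0. Qed.

Lemma brZr a u w : br w (a *: u) = a *: br w u.
Proof. by rewrite -[a *: u]addr0 brDZr br0r addr0. Qed.

Lemma br_anti u v : br u v = - br v u.
Proof.
have [_ _ brvv _] := br_lie; have := brvv (u + v).
by rewrite brDl !brDr !brvv add0r addr0 => /eqP; rewrite addr_eq0 => /eqP.
Qed.

Lemma br_jacobi u v w : br u (br v w) = br (br w u) v + br (br u v) w.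
Proof.
have [_ _ _ J] := br_lie; apply/eqP; rewrite -subr_eq0.
by rewrite (br_anti (br w u)) (br_anti (br u v)) opprD !opprK addrA J.
Qed.

End Bracket.

Section InverseScaling.
Variables (R : comPzRingType) (V : lmodType R) (P : R) (q : V -> V).
Hypotheses (qK : cancel ( *:%R P) q) (Kq : cancel q ( *:%R P)).

Definition pinv k := iter k q.

Lemma pinv_lin k a u v : pinv k (a *: u + v) = a *: pinv k u + pinv k v.
Proof.
elim: k => //= k ->; apply: (can_inj qK) => /=.
by rewrite Kq scalerDr !Kq scalerA mulrC -scalerA Kq.
Qed.

Lemma pinv0 k : pinv k 0 = 0.
Proof.
have := pinv_lin k 1 0 0; rewrite !scale1r addr0 => E.
by apply: (addrI (pinv k 0)); rewrite addr0 -E.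
Qed.

Lemma pinvK k v : P ^+ k *: pinv k v = v.
Proof. by elim: k => [|k IH]; rewrite ?scale1r //= exprSr -scalerA Kq. Qed.

Lemma scalerpK k v : pinv k (P ^+ k *: v) = v.
Proof. by elim: k v => [|k IH] v; rewrite ?scale1r //= exprSr -scalerA IH qK. Qed.

Lemma pinvD j k v : pinv j (pinv k v) = pinv (j + k) v.
Proof. by rewrite /pinv iterD. Qed.

Lemma pinv_le j k v : (j <= k)%N -> pinv j v = P ^+ (k - j) *: pinv k v.
Proof. by move=> jk; rewrite -{2}(subnK jk) -pinvD pinvK. Qed.

Variable br : V -> V -> V.
Hypothesis br_lie : lie_bracket br.

Lemma br_pinvl k u v : br (pinv k u) v = pinv k (br u v).
Proof. by rewrite -{2}[u](pinvK k) brZl // scalerpK. Qed.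

Lemma br_pinvr k u v : br u (pinv k v) = pinv k (br u v).
Proof. by rewrite -{2}[v](pinvK k) brZr // scalerpK. Qed.

End InverseScaling.

Section WeightFiltration.
Variables (R : comPzRingType) (V : lmodType R) (br : V -> V -> V).
Hypothesis br_lie : lie_bracket br.
Variables (L : V -> Prop) (c d : nat) (x : 'I_d -> V).
Hypothesis L_subalg : lie_subalg br L.
Hypothesis L_gen : forall v, L v <-> lie_span br (fun w => exists i, w = x i) v.
Hypothesis L_nil : forall v, gamma br L c.+1 v -> v = 0.

Definition lcomm (u : V) (js : seq 'I_d) := foldl (fun acc j => br acc (x j)) u js.

Lemma lcomm_rcons u js j : lcomm u (rcons js j) = br (lcomm u js) (x j).
Proof. by rewrite /lcomm foldl_rcons. Qed.

(* [lcomm (x i) js] has weight [(size js).+1]. *)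
Definition wspan m := span (fun v => exists i js, (m <= (size js).+1)%N /\ v = lcomm (x i) js).

Lemma wspan_submod m : submodule (wspan m).
Proof. exact: span_submod. Qed.

Lemma wspan_le m n v : (m <= n)%N -> wspan n v -> wspan m v.
Proof.
move=> mn; apply: span_mono => w [i [js [n_le ->]]].
by exists i, js; split=> //; apply: leq_trans n_le.
Qed.

Lemma br_wspan_x m j u : wspan m u -> wspan m.+1 (br u (x j)).
Proof.
move: u; apply: (span_lin_ind (f := br^~ (x j))) => [a v w||_ [i [js [m_le ->]]]].
- exact: brDZl.
- exact: wspan_submod.
- by apply: span_gen; exists i, (rcons js j); rewrite size_rcons ltnS lcomm_rcons.
Qed.

Lemma br_wspan_lcomm i js m u :
  wspan m u -> wspan (m + (size js).+1) (br u (lcomm (x i) js)).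
Proof.
elim/last_ind: js m u => [|js j IH] m u u_m; first by rewrite addn1; apply: br_wspan_x.
rewrite lcomm_rcons br_jacobi // size_rcons; apply: submodD; first exact: wspan_submod.
  rewrite -addSnnS; apply: IH; rewrite br_anti //.
  by apply: submodN; [apply: wspan_submod | apply: br_wspan_x].
by rewrite addnS; apply/br_wspan_x/IH.
Qed.

Lemma br_wspan m n u v : wspan m u -> wspan n v -> wspan (m + n) (br u v).
Proof.
move=> u_m; move: v; apply: (span_lin_ind (f := br u)) => [a v w||_ [i [js [n_le ->]]]].
- exact: brDZr.
- exact: wspan_submod.
- by apply: wspan_le (br_wspan_lcomm i js u_m); rewrite leq_add2l.
Qed.

Lemma gamma_submod k : submodule (gamma br L k).
Proof. by case: k => [|[|k]] /=; [case: L_subalg | case: L_subalg | apply: span_submod]. Qed.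

Lemma lcomm_L i js : L (lcomm (x i) js).
Proof.
have x_L j : L (x j) by apply/L_gen/lspan_gen; exists j.
elim/last_ind: js => [|js j IH]; first exact: x_L.
by rewrite lcomm_rcons; case: L_subalg => _; apply.
Qed.

Lemma lcomm_gamma i js : gamma br L (size js).+1 (lcomm (x i) js).
Proof.
elim/last_ind: js => [|js j IH]; first exact: lcomm_L.
rewrite lcomm_rcons size_rcons /=; apply: span_gen.
by exists (lcomm (x i) js), (x j); split=> //; apply: (lcomm_L j [::]).
Qed.

Lemma lcomm_nil i js : (c < (size js).+1)%N -> lcomm (x i) js = 0.
Proof.
move=> c_lt; have size_take_c : size (take c js) = c by rewrite size_takel // -ltnS.
have -> : lcomm (x i) js = lcomm (lcomm (x i) (take c js)) (drop c js).
  by rewrite -{1}(cat_take_drop c js) /lcomm foldl_cat.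
have -> : lcomm (x i) (take c js) = 0.
  by apply: L_nil; rewrite -{1}size_take_c; apply: lcomm_gamma.
by elim/last_ind: (drop c js) => // s j; rewrite lcomm_rcons => ->; apply: br0l.
Qed.

Lemma wspan_nil m v : (c < m)%N -> wspan m v -> v = 0.
Proof.
move=> c_lt; move: v; apply: (span_lin_ind (M := eq^~ 0) (f := id)) => // [|_ [i [js [m_le ->]]]].
  by split=> [|u v -> ->|a u ->]; rewrite ?addr0 ?scaler0.
by apply: lcomm_nil; apply: leq_trans m_le.
Qed.

Lemma gamma_wspan k v : (0 < k)%N -> gamma br L k v -> wspan k v.
Proof.
have L_wspan1 u : L u -> wspan 1 u.
  move/L_gen; elim=> [|_ [i ->]|u' w _ u'1 _ w1|a w _ w1|u' w _ u'1 _ w1].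
  - exact: span0.
  - by apply: span_gen; exists i, [::].
  - exact: span_add.
  - exact: span_scale.
  - exact: wspan_le (br_wspan u'1 w1).
case: k => // k _; elim: k v => [|k IH] v; first exact: L_wspan1.
apply: span_min; first exact: wspan_submod.
by move=> _ [u [w [u_k w_L ->]]]; rewrite -addn1; apply: br_wspan; [apply: IH | apply: L_wspan1].
Qed.

End WeightFiltration.

Fixpoint words (T : finType) k : seq (seq T) :=
  if k is k'.+1 then [::] :: [seq j :: s | j <- enum T, s <- words T k'] else [::].

Lemma mem_words (T : finType) k (s : seq T) : (s \in words T k) = (size s < k)%N.
Proof.
elim: k s => [|k IH] [|j s] //=; rewrite inE //= ltnS -IH.
apply/allpairsP/idP => [[[j' s'] [_ s'_in [_ ->]]] //|s_in].
by exists (j, s); rewrite mem_enum.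
Qed.

Lemma size_words (T : finType) k : size (words T k) = (\sum_(i < k) #|T| ^ i)%N.
Proof.
elim: k => [|k IH]; first by rewrite big_ord0.
rewrite /= size_allpairs -cardE IH big_ord_recl big_distrr expn0 add1n.
by congr _.+1; apply: eq_bigr => i _; rewrite expnS.
Qed.

Section RescaledFiltration.
Variables (p : nat) (V : lmodType (padic p)) (br : V -> V -> V).
Hypothesis br_lie : lie_bracket br.
Variables (L : V -> Prop) (c d : nat) (x : 'I_d -> V).
Hypothesis L_subalg : lie_subalg br L.
Hypothesis L_gen : forall v, L v <-> lie_span br (fun w => exists i, w = x i) v.
Hypothesis L_nil : forall v, gamma br L c.+1 v -> v = 0.
Local Notation P := (p%:R : padic p).
Variable q : V -> V.
Hypotheses (qK : cancel ( *:%R P) q) (Kq : cancel q ( *:%R P)).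
Local Notation pinv := (pinv q).
Local Notation wspan := (wspan br x).
Local Notation Lhat := (Lhat br L c).

Definition hspan m := span (fun v => exists j u, wspan (j + m) u /\ v = pinv j u).

Lemma hspan_submod m : submodule (hspan m).
Proof. exact: span_submod. Qed.

Lemma br_hspan m n u v : hspan m u -> hspan n v -> hspan (m + n) (br u v).
Proof.
move=> u_m v_n; move: u u_m; apply: (span_lin_ind (f := br^~ v)) => [a u w||].
- exact: brDZl.
- exact: hspan_submod.
move=> _ [j [u [u_jm ->]]]; move: v v_n; apply: (span_lin_ind (f := br (pinv j u))).
- by move=> a v w; apply: brDZr.
- exact: hspan_submod.
move=> _ [k [v [v_kn ->]]]; apply: span_gen; exists (j + k), (br u v).
split; last by rewrite (br_pinvl qK Kq br_lie) (br_pinvr qK Kq br_lie) pinvD.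
by rewrite addnACA; apply: br_wspan.
Qed.

Lemma hspan_nil m v : (c < m)%N -> hspan m v -> v = 0.
Proof.
move=> c_lt; move: v; apply: (span_lin_ind (M := eq^~ 0) (f := id)) => //.
  by split=> [|u v -> ->|a u ->]; rewrite ?addr0 ?scaler0.
move=> _ [j [u [u_jm ->]]].
have c_lt' : (c < j + m)%N by apply: leq_trans c_lt (leq_addl _ _).
by rewrite (wspan_nil br_lie L_subalg L_gen L_nil c_lt' u_jm) (pinv0 qK Kq).
Qed.

Lemma hspanS m v : hspan m.+1 v -> exists2 u, hspan m u & v = P *: u.
Proof.
move: v; apply: (span_lin_ind (M := fun v => exists2 u, hspan m u & v = P *: u) (f := id)) => //.
  split=> [|_ _ [u u_m ->] [v v_m ->]|a _ [u u_m ->]].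
  - by exists 0; [apply: span0 | rewrite scaler0].
  - by exists (u + v); [apply: span_add | rewrite scalerDr].
  - by exists (a *: u); [apply: span_scale | rewrite !scalerA mulrC].
move=> _ [j [u [u_jm ->]]]; exists (pinv j.+1 u).
  by apply: span_gen; exists j.+1, u; rewrite addSnnS.
by rewrite (pinv_le Kq _ (leqnSn j)) subSnn expr1.
Qed.

Lemma Lhat_hspan1 v : Lhat v -> hspan 1 v.
Proof.
move=> [vs [-> vs_gamma]]; apply: submod_sum => [|i _]; first exact: hspan_submod.
apply: span_gen; exists i, ((p ^ i)%:R *: vs i); split; last by rewrite natrX scalerpK.
by rewrite addn1; apply: (gamma_wspan br_lie L_gen).
Qed.

Definition gens := [seq pinv (size js) (lcomm br x (x i) js) | i <- enum 'I_d, js <- words 'I_d c].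

Lemma size_gens : size gens = (d * \sum_(i < c) d ^ i)%N.
Proof. by rewrite size_allpairs size_enum_ord size_words card_ord. Qed.

Lemma gens_Lhat g : g \in gens -> Lhat g.
Proof.
case/allpairsP => [[i js] [_ js_c ->]] /=; rewrite mem_words in js_c.
pose k0 := Ordinal js_c.
exists (fun k => if k == k0 then pinv (size js) (lcomm br x (x i) js) else 0).
split=> [|k].
  by rewrite (bigD1 k0) //= eqxx big1 ?addr0 // => k /negbTE ->.
case: eqVneq => [->|_]; first by rewrite natrX (pinvK Kq); exact: lcomm_gamma.
by rewrite scaler0; exact: submod0 (gamma_submod L_subalg _).
Qed.

Lemma hspan1_gens v : hspan 1 v -> span (fun w => w \in gens) v.
Proof.
apply: span_min => [|_ [j [u [u_j1 ->]]]]; first exact: span_submod.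
move: u u_j1; apply: (span_lin_ind (f := pinv j)) => [a u w||_ [i [js [j_le ->]]]].
- exact: pinv_lin.
- exact: span_submod.
have [c_lt|js_c] := ltnP c (size js).+1.
  by rewrite (lcomm_nil br_lie L_subalg L_gen L_nil) // (pinv0 qK Kq); apply: span0.
have j_js : (j <= size js)%N by rewrite -ltnS -addn1.
rewrite (pinv_le Kq _ j_js).
by apply/span_scale/span_gen/allpairs_f; rewrite ?mem_enum ?mem_words.
Qed.

Lemma gens_L g : g \in gens -> L ((p ^ c.-1)%:R *: g).
Proof.
case/allpairsP => [[i js] [_ js_c ->]] /=; rewrite mem_words in js_c.
have js_le : (size js <= c.-1)%N by rewrite -ltnS prednK // (leq_ltn_trans _ js_c).
rewrite natrX -(subnK js_le) exprD -scalerA (pinvK Kq).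
by apply: submodZ (lcomm_L L_subalg L_gen _ _); case: L_subalg.
Qed.

Lemma Lhat_submod : submodule Lhat.
Proof.
split.
- exists (fun _ => 0); split=> [|i]; first by rewrite big1.
  by rewrite scaler0; exact: submod0 (gamma_submod L_subalg _).
- move=> _ _ [vs [-> vs_gamma]] [ws [-> ws_gamma]].
  exists (fun i => vs i + ws i); split=> [|i]; first by rewrite big_split.
  by rewrite scalerDr; apply: submodD; [apply: gamma_submod | |].
- move=> a _ [vs [-> vs_gamma]]; exists (fun i => a *: vs i); split=> [|i].
    by rewrite scaler_sumr.
  by rewrite scalerA mulrC -scalerA; apply: submodZ; [apply: gamma_submod |].
Qed.

Lemma Lhat_hspan : Lhat = hspan 1.
Proof.
apply: funext => v; apply: propext; split; first exact: Lhat_hspan1.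
move/hspan1_gens; apply: span_min; [exact: Lhat_submod | exact: gens_Lhat].
Qed.

Lemma Lhat_span_gens : Lhat = span (fun w => w \in gens).
Proof.
apply: funext => v; apply: propext; split; first by rewrite Lhat_hspan; apply: hspan1_gens.
by apply: span_min; [exact: Lhat_submod | exact: gens_Lhat].
Qed.

Lemma gamma_Lhat k v : (0 < k)%N -> gamma br Lhat k v -> hspan k v.
Proof.
rewrite Lhat_hspan; case: k => // k _; elim: k v => [//|k IH] v.
apply: span_min => [|_ [u [w [u_k w_1 ->]]]]; first exact: hspan_submod.
by rewrite -addn1; apply: br_hspan => //; apply: IH.
Qed.

Lemma L_Lhat v : L v -> Lhat v.
Proof.
rewrite Lhat_hspan => Lv; apply: span_gen; exists 0%N, v; split=> //.
by apply: (gamma_wspan br_lie L_gen (k := 1)).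
Qed.

Lemma Lhat_powerful_nilpotent : [/\ lie_subalg br Lhat, lie_fin_gen br Lhat,
  powerful br Lhat & nil_class br Lhat c].
Proof.
have br_Lhat u v : Lhat u -> Lhat v -> exists2 w, Lhat w & br u v = P *: w.
  by rewrite Lhat_hspan => u_1 v_1; apply: hspanS (br_hspan u_1 v_1).
have Lhat_subalg : lie_subalg br Lhat.
  split=> [|u v Lu Lv]; first exact: Lhat_submod.
  by have [w Lw ->] := br_Lhat u v Lu Lv; apply: submodZ Lhat_submod Lw.
split=> //.
- exists gens => v; rewrite Lhat_span_gens; apply: lie_span_span => u w.
  by rewrite -Lhat_span_gens; case: Lhat_subalg => _; apply.
- move=> w; rewrite -[commut _ _ _]/(gamma br Lhat 2) => /gamma_Lhat/hspanS.
  by case=> // u; rewrite -Lhat_hspan; exists u.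
- by move=> v /gamma_Lhat/hspan_nil; apply.
Qed.

Hypothesis p_prime : prime p.

Lemma Lhat_rank_le : rank_le Lhat (d * \sum_(i < c) d ^ i).
Proof. by rewrite Lhat_span_gens -size_gens; apply: rank_le_span. Qed.

Lemma Lhat_index_le : index_le L Lhat ((p ^ c.-1) ^ (d * \sum_(i < c) d ^ i)).
Proof.
rewrite Lhat_span_gens -size_gens; apply: index_le_span => //.
- by case: L_subalg.
- by move=> v /L_Lhat; rewrite Lhat_span_gens.
- exact: gens_L.
Qed.

End RescaledFiltration.

Theorem lemma3p2 :
  (forall (p c d : nat), prime p -> (0 < c)%N -> (0 < d)%N ->
   forall (V : lmodType (padic p)) (br : V -> V -> V) (L : V -> Prop)
          (x : 'I_d -> V),
     lie_bracket br -> free_nilpotent_on br L c x -> qp_envelope L ->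
     [/\ lie_subalg br (Lhat br L c), lie_fin_gen br (Lhat br L c),
         powerful br (Lhat br L c) & nil_class br (Lhat br L c) c])
  /\
  (exists f : nat -> nat -> nat,
   forall (p c d : nat), prime p -> (0 < c)%N -> (0 < d)%N ->
   forall (V : lmodType (padic p)) (br : V -> V -> V) (L : V -> Prop)
          (x : 'I_d -> V),
     lie_bracket br -> free_nilpotent_on br L c x -> qp_envelope L ->
     rank_le (Lhat br L c) (f c d))
  /\
  (exists g : nat -> nat -> nat -> nat,
   forall (p c d : nat), prime p -> (0 < c)%N -> (0 < d)%N ->
   forall (V : lmodType (padic p)) (br : V -> V -> V) (L : V -> Prop)
          (x : 'I_d -> V),
     lie_bracket br -> free_nilpotent_on br L c x -> qp_envelope L ->
     index_le L (Lhat br L c) (g p c d)).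
Proof.
split; [|split].
- move=> p c d _ _ _ V br L x br_lie [L_subalg L_gen L_nil _] [[q qK Kq] _].
  exact (Lhat_powerful_nilpotent br_lie L_subalg L_gen L_nil qK Kq).
- exists (fun c d => d * \sum_(i < c) d ^ i)%N.
  move=> p c d p_prime _ _ V br L x br_lie [L_subalg L_gen L_nil _] [[q qK Kq] _].
  exact (Lhat_rank_le br_lie L_subalg L_gen L_nil qK Kq p_prime).
- exists (fun p c d => (p ^ c.-1) ^ (d * \sum_(i < c) d ^ i))%N.
  move=> p c d p_prime _ _ V br L x br_lie [L_subalg L_gen L_nil _] [[q qK Kq] _].
  exact (Lhat_index_le br_lie L_subalg L_gen L_nil qK Kq p_prime).
Qed.
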